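(* Let $V_0,V_1,\dots,V_k$ be smooth vector fields on $\mathbb{R}^k$, $L=\sum_{i=1}^kV_i^2+V_0$, and let $\sigma=(\sigma_1,\dots,\sigma_k):\mathbb{R}^k\to\mathbb{R}^k$ be a $C^1$ map with \[C_\sigma:=\sup_{p\in\mathbb{R}^k}\Big(\sum_{i,j=1}^k(V_i\sigma_j(p))^2\Big)^{1/2}<\infty .\] On functions $f(p,\xi)$, $p,\xi\in\mathbb{R}^k$, let $\mathcal{L}=L+\sum_{i=1}^k\sigma_i(p)\frac{\partial}{\partial\xi_i}$ (with $L$ acting in $p$). Define $\Gamma(f)=\frac12(\mathcal{L}f^2-2f\mathcal{L}f)$, $\Gamma_2(f)=\frac12(\mathcal{L}\Gamma(f)-2\Gamma(f,\mathcal{L}f))$, $\Gamma^L(f)=\frac12(Lf^2-2fLf)$, $\Gamma_2^L(f)=\frac12(L\Gamma^L(f)-2\Gamma^L(f,Lf))$, $\Gamma^Z(f)=\|\nabla_\xi f\|^2$ and $\Gamma_2^Z(f)=\frac12(\mathcal{L}\Gamma^Z(f)-2\Gamma^Z(f,\mathcal{L}f))$, bilinear versions being obtained by polarization. If for some $\rho\in\mathbb{R}$ we have $\Gamma_2^L(f)\ge\rho\,\Gamma^L(f)$ for all smooth $f$, then for every $f\in C^\infty(\mathbb{R}^k\times\mathbb{R}^k)$, \[\Gamma_2(f)\ge\Big(\rho-\frac{C_\sigma}{2}\Big)\Gamma(f)-\frac{C_\sigma}{2}\Gamma^Z(f),\qquad\Gamma_2^Z(f)\ge0 .\]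
   Context: $\nabla_\xi$ denotes the Euclidean gradient in the variable $\xi\in\mathbb{R}^k$ and $\|\cdot\|$ the Euclidean norm. *)

From HB Require Import structures.
From mathcomp Require Import all_boot all_order all_algebra.
From mathcomp Require Import all_classical all_reals all_analysis.
Set Implicit Arguments. Unset Strict Implicit. Unset Printing Implicit Defensive.
Import Order.TTheory GRing.Theory Num.Theory.
Import numFieldNormedType.Exports.
Local Open Scope classical_set_scope.
Local Open Scope ring_scope.

Section Defs.
Variable R : realType.

Fixpoint iterD {E : normedModType R} (vs : seq E) (f : E -> R) : E -> R :=
  match vs with
  | [::] => f
  | v :: vs' => fun x => 'D_v (iterD vs' f) x
  end.

Definition smooth {E : normedModType R} (f : E -> R) : Prop :=
  forall (vs : seq E) (x : E), differentiable (iterD vs f) x.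

Definition C1 {E : normedModType R} (f : E -> R) : Prop :=
  (forall x, differentiable f x) /\ (forall v : E, continuous ('D_v f)).

Variable k : nat.
Local Notation vec := 'rV[R]_k.

Definition comp (X : vec -> vec) (j : 'I_k) : vec -> R := fun p => X p 0 j.
Definition smooth_vf (X : vec -> vec) : Prop := forall j, smooth (comp X j).
Definition C1_map (X : vec -> vec) : Prop := forall j, C1 (comp X j).

Definition vf_act (X : vec -> vec) (g : vec -> R) : vec -> R :=
  fun p => 'D_(X p) g p.

Variables (V0 : vec -> vec) (V : 'I_k -> vec -> vec) (sigma : vec -> vec).

Definition Lop (g : vec -> R) : vec -> R :=
  fun p => \sum_(i < k) vf_act (V i) (vf_act (V i) g) p + vf_act V0 g p.

Definition GammaL (f : vec -> R) : vec -> R :=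
  fun p => 2^-1 * (Lop (fun q => f q * f q) p - 2 * f p * Lop f p).
Definition GammaLB (f g : vec -> R) : vec -> R :=
  fun p => 4^-1 * (GammaL (fun q => f q + g q) p - GammaL (fun q => f q - g q) p).
Definition Gamma2L (f : vec -> R) : vec -> R :=
  fun p => 2^-1 * (Lop (GammaL f) p - 2 * GammaLB f (Lop f) p).

Definition sigma_norm (p : vec) : R :=
  Num.sqrt (\sum_(i < k) \sum_(j < k) (vf_act (V i) (comp sigma j) p) ^+ 2).
Definition Csigma : R := sup (range sigma_norm).

Local Notation pvec := (vec * vec)%type.

Definition pact (X : vec -> vec) (g : pvec -> R) : pvec -> R :=
  fun z => 'D_((X z.1, 0) : pvec) g z.
Definition Zsig (g : pvec -> R) : pvec -> R :=
  fun z => 'D_(((0 : vec), sigma z.1) : pvec) g z.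
Definition dxi (i : 'I_k) (g : pvec -> R) : pvec -> R :=
  fun z => 'D_(((0 : vec), (delta_mx 0 i : vec)) : pvec) g z.

Definition calL (g : pvec -> R) : pvec -> R :=
  fun z => \sum_(i < k) pact (V i) (pact (V i) g) z + pact V0 g z + Zsig g z.

Definition Gamma (f : pvec -> R) : pvec -> R :=
  fun z => 2^-1 * (calL (fun w => f w * f w) z - 2 * f z * calL f z).
(* bilinear carre du champ of script L *)
Definition GammaB (f g : pvec -> R) : pvec -> R :=
  fun z => \sum_(i < k) pact (V i) f z * pact (V i) g z.
Definition Gamma2 (f : pvec -> R) : pvec -> R :=
  fun z => 2^-1 * (calL (Gamma f) z - 2 * GammaB f (calL f) z).

Definition GammaZB (f g : pvec -> R) : pvec -> R :=
  fun z => \sum_(i < k) dxi i f z * dxi i g z.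
Definition GammaZ (f : pvec -> R) : pvec -> R := GammaZB f f.
Definition Gamma2Z (f : pvec -> R) : pvec -> R :=
  fun z => 2^-1 * (calL (GammaZ f) z - 2 * GammaZB f (calL f) z).

End Defs.

From Pilot Require Import Defs.
From HB Require Import structures.
From mathcomp Require Import all_boot all_order all_algebra.
From mathcomp Require Import all_classical all_reals all_analysis.
From mathcomp Require Import ring lra.
Import Order.TTheory GRing.Theory Num.Theory.
Import numFieldNormedType.Exports.
Local Open Scope classical_set_scope.
Local Open Scope ring_scope.

(* Write P_i = V_i f and D_j = d/dxi_j f.  The drift Z = sum_j sigma_j(p) d/dxi_j is a
   first-order operator, so Gamma(f) = sum_i P_i^2, which at fixed xi is Gamma^L of
   f(., xi).  Expanding Gamma_2(f), the only terms involving Z that survive are the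
   commutators [Z, V_i] f = - sum_j (V_i sigma_j) D_j, whence
   Gamma_2(f) = Gamma_2^L(f(., xi)) - sum_{i,j} P_i (V_i sigma_j) D_j; Cauchy-Schwarz
   and AM-GM bound the cross term by C_sigma/2 (Gamma(f) + Gamma^Z(f)).  Finally
   d/dxi_j commutes with script L, whose coefficients do not depend on xi (Schwarz's
   theorem), so Gamma_2^Z(f) = sum_j Gamma(D_j) >= 0. *)

Set Implicit Arguments. Unset Strict Implicit. Unset Printing Implicit Defensive.

Section smooth_functions.
Variables (R : realType) (E : normedModType R).
Implicit Types (f g : E -> R) (u v x : E).

Lemma iterD_cat (vs ws : seq E) f : Defs.iterD (vs ++ ws) f = Defs.iterD vs (Defs.iterD ws f).
Proof. by elim: vs => //= v vs ->. Qed.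

Lemma smooth_differentiable f x : smooth f -> differentiable f x.
Proof. by move=> sf; exact: (sf [::] x). Qed.

Lemma smooth_derive f v : smooth f -> smooth ('D_v f).
Proof. by move=> sf vs x; have := sf (vs ++ [:: v]) x; rewrite iterD_cat. Qed.

Lemma derive_addf f g v x : differentiable f x -> differentiable g x ->
  'D_v (fun y => f y + g y) x = 'D_v f x + 'D_v g x.
Proof. by move=> /diff_derivable df /diff_derivable dg; exact: deriveD (df v) (dg v). Qed.

Lemma derive_subf f g v x : differentiable f x -> differentiable g x ->
  'D_v (fun y => f y - g y) x = 'D_v f x - 'D_v g x.
Proof. by move=> /diff_derivable df /diff_derivable dg; exact: deriveB (df v) (dg v). Qed.

Lemma derive_mulf f g v x : differentiable f x -> differentiable g x ->
  'D_v (fun y => f y * g y) x = f x * 'D_v g x + g x * 'D_v f x.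
Proof. by move=> /diff_derivable df /diff_derivable dg; exact: deriveM (df v) (dg v). Qed.

Lemma derive_scalef (c : R) f v x : differentiable f x ->
  'D_v (fun y => c * f y) x = c * 'D_v f x.
Proof. by move=> /diff_derivable df; have := deriveZ c (df v). Qed.

Lemma derive_sumf n (F : 'I_n -> E -> R) v x : (forall i, differentiable (F i) x) ->
  'D_v (fun y => \sum_(i < n) F i y) x = \sum_(i < n) 'D_v (F i) x.
Proof. by move=> dF; rewrite -fct_sumE derive_sum // => i; exact: diff_derivable. Qed.

Lemma differentiable_sumf n (F : 'I_n -> E -> R) x : (forall i, differentiable (F i) x) ->
  differentiable (fun y => \sum_(i < n) F i y) x.
Proof. by move=> dF; rewrite -fct_sumE; exact: differentiable_sum. Qed.

(* Closure of smooth functions under sums and products: this class consists of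
   differentiable functions and is stable under every 'D_v. *)
Inductive smooth_expr : (E -> R) -> Prop :=
| smooth_expr_base f : smooth f -> smooth_expr f
| smooth_exprD f g : smooth_expr f -> smooth_expr g -> smooth_expr (f + g)
| smooth_exprM f g : smooth_expr f -> smooth_expr g -> smooth_expr (f * g).

Lemma smooth_expr_differentiable f : smooth_expr f -> forall x, differentiable f x.
Proof.
elim=> [h sh|h k _ dh _ dk|h k _ dh _ dk] x.
- exact: smooth_differentiable.
- exact: differentiableD.
- exact: differentiableM.
Qed.

Lemma smooth_expr_derive f v : smooth_expr f -> smooth_expr ('D_v f).
Proof.
have dv g x : smooth_expr g -> derivable g x v.
  by move=> eg; exact/diff_derivable/smooth_expr_differentiable.
elim=> [h sh|h k eh Dh ek Dk|h k eh Dh ek Dk].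
- exact/smooth_expr_base/smooth_derive.
- have -> : 'D_v (h + k) = 'D_v h + 'D_v k.
    by apply/funext => x; rewrite deriveD //; apply: dv.
  exact: smooth_exprD.
- have -> : 'D_v (h * k) = h * 'D_v k + k * 'D_v h.
    by apply/funext => x; rewrite deriveM //; apply: dv.
  by apply: smooth_exprD; apply: smooth_exprM.
Qed.

Lemma smooth_exprP f : smooth_expr f -> smooth f.
Proof.
move=> ef vs; apply: smooth_expr_differentiable.
by elim: vs => //= v vs IH; exact: smooth_expr_derive.
Qed.

Lemma smoothD f g : smooth f -> smooth g -> smooth (f + g).
Proof. by move=> sf sg; apply/smooth_exprP/smooth_exprD; exact: smooth_expr_base. Qed.

Lemma smoothM f g : smooth f -> smooth g -> smooth (f * g).
Proof. by move=> sf sg; apply/smooth_exprP/smooth_exprM; exact: smooth_expr_base. Qed.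

Lemma smooth_cst (c : R) : smooth (cst c : E -> R).
Proof.
have iterD_cst (vs : seq E) : exists c', Defs.iterD vs (cst c) = cst c'.
  elim: vs => [|v vs [c' IH]] /=; first by exists c.
  by exists 0; rewrite IH; apply/funext => y; exact: derive_cst.
by move=> vs x; have [c' ->] := iterD_cst vs; exact: differentiable_cst.
Qed.

Lemma smoothB f g : smooth f -> smooth g -> smooth (f - g).
Proof.
move=> sf sg; have -> : f - g = f + cst (-1) * g.
  by apply/funext => y /=; rewrite mulN1r.
by apply: smoothD => //; apply: smoothM => //; exact: smooth_cst.
Qed.

Lemma smooth_sum n (F : 'I_n -> E -> R) : (forall i, smooth (F i)) ->
  smooth (fun y => \sum_(i < n) F i y).
Proof.
move=> sF; rewrite -fct_sumE.
by apply: (big_ind (@smooth R E)) => [|f g|i _]; [exact: smooth_cst|exact: smoothD|].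
Qed.

End smooth_functions.

Section reparametrization.
Variables (R : realType) (E F : normedModType R).

Lemma derive_reparam (f : E -> R) (g : F -> R) a b v w :
  (forall h : R, f (h *: v + a) = g (h *: w + b)) -> 'D_v f a = 'D_w g b.
Proof.
move=> fg; have := fg 0; rewrite !scale0r !add0r => fg0.
rewrite /derive; set Df := fun h => _; set Dg := fun h => _.
suff -> : Df = Dg by [].
by apply/funext => h; rewrite /Df /Dg /= fg fg0.
Qed.

Lemma derivable_reparam (f : E -> R) (g : F -> R) a b v w :
  (forall h : R, f (h *: v + a) = g (h *: w + b)) -> derivable f a v = derivable g b w.
Proof.
move=> fg; have := fg 0; rewrite !scale0r !add0r => fg0.
rewrite /derivable; set Df := fun h => _; set Dg := fun h => _.
suff -> : Df = Dg by [].
by apply/funext => h; rewrite /Df /Dg /= fg fg0.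
Qed.

End reparametrization.

Section schwarz.
Variables (R : realType) (E : normedModType R).

Lemma MVT_line (f : E -> R) (y w : E) (t : R) : 0 < t ->
  (forall z, differentiable f z) ->
  exists2 c, c \in `]0, t[ & f (t *: w + y) - f y = 'D_w f (c *: w + y) * t.
Proof.
move=> t0 df; set g := fun s : R => f (s *: w + y).
have g_line s h : g (h *: 1 + s) = f (h *: w + (s *: w + y)).
  by rewrite /g scaler1 scalerDl addrA.
have dg s : is_derive s (1 : R) g ('D_w f (s *: w + y)).
  apply: DeriveDef; last exact: derive_reparam (g_line s).
  by rewrite (derivable_reparam (g_line s)); exact: diff_derivable.
have cg : continuous g.
  by move=> s; apply/differentiable_continuous/derivable1_diffP; case: (dg s).
have [c c_in gc] := MVT t0 (fun s _ => dg s) (continuous_subspaceT cg).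
by exists c => //; move: gc; rewrite /g scale0r add0r subr0.
Qed.

Lemma second_difference_MVT (f : E -> R) (u v x : E) (s t : R) : 0 < s -> 0 < t ->
  (forall z, differentiable f z) -> (forall z, differentiable ('D_v f) z) ->
  exists s1 t1, [/\ s1 \in `]0, s[, t1 \in `]0, t[ &
   f (t *: v + (s *: u + x)) - f (s *: u + x) - (f (t *: v + x) - f x) =
   'D_u ('D_v f) (s1 *: u + (t1 *: v + x)) * s * t].
Proof.
move=> s0 t0 df dDf; set g := fun z => f (z + s *: u) - f z.
have df_shift z : differentiable (fun z => f (z + s *: u)) z.
  exact: (@differentiable_comp _ _ _ _ (fun z => z + s *: u) f).
have dg z : differentiable g z by apply: differentiableB.
have Dg z : 'D_v g z = 'D_v f (z + s *: u) - 'D_v f z.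
  rewrite deriveB; try exact: diff_derivable.
  by congr (_ - _); apply: derive_reparam => h; rewrite addrA.
have [t1 t1_in gt1] := MVT_line x v t0 dg.
have [s1 s1_in Dfs1] := MVT_line (t1 *: v + x) u s0 dDf.
exists s1, t1; split => //.
have -> : f (t *: v + (s *: u + x)) - f (s *: u + x) - (f (t *: v + x) - f x)
    = g (t *: v + x) - g x.
  by rewrite /g -(addrA (t *: v)) (addrC x (s *: u)); ring.
by rewrite gt1 Dg (addrC _ (s *: u)) Dfs1.
Qed.

Lemma eq_of_close_values (a b : E -> R) x :
  {for x, continuous a} -> {for x, continuous b} ->
  (forall d, 0 < d -> exists p q, [/\ `|x - p| < d, `|x - q| < d & a p = b q]) ->
  a x = b x.
Proof.
move=> ca cb close; apply/eqP; rewrite -subr_eq0 -normr_le0.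
apply/ler_addgt0Pr => e e0; rewrite add0r.
have e2 : 0 < e / 2 by rewrite divr_gt0.
have [da da0 near_a] := (nbhs_ballP _ _).1 (cvgr_dist_lt _ _ ca _ e2).
have [db db0 near_b] := (nbhs_ballP _ _).1 (cvgr_dist_lt _ _ cb _ e2).
have [|p [q []]] := close (Num.min da db); first by rewrite lt_min da0 db0.
rewrite !lt_min => /andP[xp _] /andP[_ xq] apbq.
have /near_a ap : ball x da p by rewrite -ball_normE.
have /near_b bq : ball x db q by rewrite -ball_normE.
have -> : a x - b x = (a x - a p) - (b x - b q) by rewrite apbq; ring.
rewrite (le_trans (ler_normB _ _)) // [leRHS](splitr e) ltW // ltrD //.
Qed.

(* Both mixed partials are values of the same second difference quotient with step
   e at points within e (|u| + |v|) of x, for every e > 0. *)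
Lemma smooth_derive_comm (f : E -> R) u v x : smooth f ->
  'D_u ('D_v f) x = 'D_v ('D_u f) x.
Proof.
move=> sf; have df z : differentiable f z := sf [::] z.
have dDv z : differentiable ('D_v f) z := sf [:: v] z.
have dDu z : differentiable ('D_u f) z := sf [:: u] z.
apply: (@eq_of_close_values ('D_u ('D_v f)) ('D_v ('D_u f))).
- exact: differentiable_continuous (sf [:: u; v] x).
- exact: differentiable_continuous (sf [:: v; u] x).
move=> d d0.
have N0 : 0 < `|u| + `|v| + 1 by rewrite ltr_wpDl // addr_ge0.
set e := d / (`|u| + `|v| + 1).
have e0 : 0 < e by rewrite divr_gt0.
have ed : e * (`|u| + `|v|) < d.
  by rewrite /e mulrAC ltr_pdivrMr // ltr_pM2l // ltrDl.
clearbody e.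
have close_pt (a b : E) s t : `|a| + `|b| = `|u| + `|v| ->
    s \in `]0, e[ -> t \in `]0, e[ -> `|x - (s *: a + (t *: b + x))| < d.
  rewrite !in_itv /= => ab /andP[s0 se] /andP[t0 te].
  rewrite (addrC (t *: b) x) addrCA opprD addrA subrr add0r normrN.
  apply: le_lt_trans (ler_normD _ _) (le_lt_trans _ ed).
  rewrite !normrZ !gtr0_norm // -ab mulrDr.
  by rewrite lerD // ler_wpM2r // ltW.
have [s1 [t1 [s1_in t1_in Dvu]]] := second_difference_MVT u x e0 e0 df dDv.
have [s2 [t2 [s2_in t2_in Duv]]] := second_difference_MVT v x e0 e0 df dDu.
exists (s1 *: u + (t1 *: v + x)), (s2 *: v + (t2 *: u + x)).
split; [exact: close_pt erefl s1_in t1_in | exact: close_pt (addrC _ _) s2_in t2_in |].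
have e_neq0 : e != 0 by rewrite gt_eqF.
apply: (mulIf e_neq0); apply: (mulIf e_neq0).
apply: etrans (esym Dvu) (etrans _ Duv).
by rewrite (addrCA (e *: v)); ring.
Qed.

End schwarz.

Section product_space.
Variables (R : realType) (k : nat).
Local Notation vec := 'rV[R]_k.
Local Notation pvec := (vec * vec)%type.

Lemma pair_sum (I : finType) (F G : I -> vec) :
  ((\sum_i F i, \sum_i G i) : pvec) = \sum_i ((F i, G i) : pvec).
Proof. by apply: (big_rec3 (fun x y (z : pvec) => (x, y) = z)) => // i x y z _ <-. Qed.

Lemma pair_line (t : R) (a b c d : vec) :
  t *: ((a, b) : pvec) + (c, d) = (t *: a + c, t *: b + d).
Proof. by []. Qed.

Lemma derive_pair_dir (h : pvec -> R) (w : pvec) (a b : vec) : differentiable h w ->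
  'D_((a, b) : pvec) h w = \sum_(l < k) a 0 l * 'D_((delta_mx 0 l, 0) : pvec) h w
                          + \sum_(l < k) b 0 l * dxi l h w.
Proof.
move=> dh; have -> : ((a, b) : pvec) = \sum_(l < k) (a 0 l *: ((delta_mx 0 l, 0) : pvec)
                                          + b 0 l *: ((0, delta_mx 0 l) : pvec)).
  rewrite {1}(row_sum_delta a) {1}(row_sum_delta b) -pair_sum.
  by congr pair; apply: eq_bigr => l _ /=; rewrite scaler0 ?addr0 ?add0r.
rewrite deriveE // linear_sum -big_split; apply: eq_bigr => l _.
by rewrite linearD !linearZ /= -!deriveE.
Qed.

Lemma pact_sumE (X : vec -> vec) (h : pvec -> R) w : differentiable h w ->
  pact X h w = \sum_(l < k) Defs.comp X l w.1 * 'D_((delta_mx 0 l, 0) : pvec) h w.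
Proof.
move=> dh; rewrite /pact derive_pair_dir // [X in _ + X]big1 ?addr0 // => l _.
by rewrite mxE mul0r.
Qed.

Lemma Zsig_sumE (sigma : vec -> vec) (h : pvec -> R) w : differentiable h w ->
  Zsig sigma h w = \sum_(l < k) Defs.comp sigma l w.1 * dxi l h w.
Proof.
move=> dh; rewrite /Zsig derive_pair_dir // [X in X + _]big1 ?add0r // => l _.
by rewrite mxE mul0r.
Qed.

Lemma differentiable_fst (w : pvec) : differentiable (@fst vec vec) w.
Proof. by apply: (@linear_differentiable _ _ _ (@fst vec vec)) => x; exact: cvg_fst. Qed.

Lemma differentiable_fst_comp (c : vec -> R) (w : pvec) : differentiable c w.1 ->
  differentiable (fun w : pvec => c w.1) w.
Proof. exact: differentiable_comp (differentiable_fst w). Qed.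

Lemma smooth_fst_comp (c : vec -> R) : smooth c -> smooth (fun w : pvec => c w.1).
Proof.
move=> sc; suff iterD_fst (vs : seq pvec) :
    Defs.iterD vs (fun w : pvec => c w.1) = fun w => Defs.iterD (map fst vs) c w.1.
  by move=> vs w; rewrite iterD_fst; exact/differentiable_fst_comp/sc.
elim: vs => //= v vs ->; apply/funext => w; exact: derive_reparam.
Qed.

Lemma smooth_frozen (h : pvec -> R) (xi : vec) : smooth h -> smooth (fun p => h (p, xi)).
Proof.
move=> sh; suff iterD_frozen (vs : seq vec) : Defs.iterD vs (fun p => h (p, xi)) =
    fun p => Defs.iterD (map (fun v => ((v, 0) : pvec)) vs) h (p, xi).
  move=> vs p; rewrite iterD_frozen.
  apply: (@differentiable_comp _ _ _ _ (fun q : vec => ((q, xi) : pvec))); last exact: sh.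
  by apply: differentiable_pair => //; exact: differentiable_cst.
elim: vs => //= v vs ->; apply/funext => p; apply: derive_reparam => t.
by rewrite pair_line scaler0 add0r.
Qed.

Lemma vf_act_frozen (X : vec -> vec) (h : pvec -> R) (xi : vec) :
  vf_act X (fun p => h (p, xi)) = fun p => pact X h (p, xi).
Proof.
apply/funext => p; apply: derive_reparam => t.
by rewrite pair_line scaler0 add0r.
Qed.

Lemma smooth_pact (X : vec -> vec) (h : pvec -> R) : smooth_vf X -> smooth h ->
  smooth (pact X h).
Proof.
move=> sX sh; have -> : pact X h = fun w =>
    \sum_(l < k) Defs.comp X l w.1 * 'D_((delta_mx 0 l, 0) : pvec) h w.
  by apply/funext => w; rewrite pact_sumE //; exact: smooth_differentiable.
apply: smooth_sum => l; apply: (smoothM (f := fun w : pvec => Defs.comp X l w.1)).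
  exact: smooth_fst_comp.
exact: smooth_derive.
Qed.

Lemma differentiable_Zsig (sigma : vec -> vec) (h : pvec -> R) w : C1_map sigma ->
  smooth h -> differentiable (Zsig sigma h) w.
Proof.
move=> hsigma sh; have -> : Zsig sigma h = fun w =>
    \sum_(l < k) Defs.comp sigma l w.1 * dxi l h w.
  by apply/funext => z; rewrite Zsig_sumE //; exact: smooth_differentiable.
apply: differentiable_sumf => l; apply: differentiableM.
  exact/differentiable_fst_comp/(hsigma l).1.
exact/smooth_differentiable/smooth_derive.
Qed.

(* Moving along xi leaves the direction a w.1 unchanged, so this is Schwarz's theorem. *)
Lemma dxi_derive_field (a : vec -> pvec) (h : pvec -> R) j : smooth h ->
  dxi j (fun w => 'D_(a w.1) h w) = fun w => 'D_(a w.1) (dxi j h) w.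
Proof.
move=> sh; apply/funext => -[p xi].
transitivity ('D_(((0 : vec), (delta_mx 0 j : vec)) : pvec) ('D_(a p) h) (p, xi)).
  by apply: derive_reparam => t; rewrite pair_line scaler0 add0r.
exact: smooth_derive_comm.
Qed.

End product_space.

Section lifted_generator.
Variables (R : realType) (k : nat).
Local Notation vec := 'rV[R]_k.
Local Notation pvec := (vec * vec)%type.
Variables (V0 : vec -> vec) (V : 'I_k -> vec -> vec) (sigma : vec -> vec).
Hypotheses (hV0 : smooth_vf V0) (hV : forall i, smooth_vf (V i)) (hsigma : C1_map sigma).

Definition liftL (h : pvec -> R) : pvec -> R :=
  fun w => \sum_(i < k) pact (V i) (pact (V i) h) w + pact V0 h w.

Lemma calLE (h : pvec -> R) w : calL V0 V sigma h w = liftL h w + Zsig sigma h w.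
Proof. by []. Qed.

Lemma smooth_liftL (h : pvec -> R) : smooth h -> smooth (liftL h).
Proof.
move=> sh; apply: (smoothD (f := fun w => \sum_(i < k) pact (V i) (pact (V i) h) w)).
  by apply: smooth_sum => i; do 2 apply: smooth_pact => //.
exact: smooth_pact.
Qed.

Lemma Lop_frozen (h : pvec -> R) (xi : vec) :
  Lop V0 V (fun p => h (p, xi)) = fun p => liftL h (p, xi).
Proof.
apply/funext => p; rewrite /Lop /liftL (vf_act_frozen V0 h xi).
have VVh i : vf_act (V i) (vf_act (V i) (fun q => h (q, xi))) p =
    pact (V i) (pact (V i) h) (p, xi).
  rewrite (congr1 (fun g => vf_act (V i) g p) (vf_act_frozen (V i) h xi)).
  by rewrite (vf_act_frozen (V i) (pact (V i) h) xi).
by rewrite [X in X + _ = _](eq_bigr _ (fun i _ => VVh i)).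
Qed.

Lemma pact_sqr (X : vec -> vec) (h : pvec -> R) : smooth h ->
  pact X (fun w => h w * h w) = fun w => 2 * h w * pact X h w.
Proof.
move=> sh; apply/funext => w.
by rewrite /pact derive_mulf; [ring | exact: smooth_differentiable..].
Qed.

Lemma liftL_sqr (h : pvec -> R) w : smooth h ->
  liftL (fun z => h z * h z) w = 2 * h w * liftL h w + 2 * GammaB V h h w.
Proof.
move=> sh; have dh z : differentiable h z by exact: smooth_differentiable.
have VVsqr i : pact (V i) (pact (V i) (fun z => h z * h z)) w =
    2 * h w * pact (V i) (pact (V i) h) w + 2 * (pact (V i) h w * pact (V i) h w).
  rewrite (congr1 (pact (V i)) (pact_sqr (V i) sh)) {1}/pact.
  rewrite (derive_mulf (f := fun z => 2 * h z)); last 2 first.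
  - exact: differentiableM.
  - exact/smooth_differentiable/smooth_pact.
  rewrite derive_scalef // -/(pact (V i) h w) -/(pact (V i) (pact (V i) h) w); ring.
rewrite /liftL [X in X + _ = _](eq_bigr _ (fun i _ => VVsqr i)) big_split /=.
by rewrite -!mulr_sumr (pact_sqr V0 sh) /GammaB; ring.
Qed.

Lemma Zsig_sqr (h : pvec -> R) w : smooth h ->
  Zsig sigma (fun z => h z * h z) w = 2 * h w * Zsig sigma h w.
Proof.
by move=> sh; rewrite /Zsig derive_mulf; [ring | exact: smooth_differentiable..].
Qed.

(* Zsig is a first-order operator, so it does not contribute to the carre du champ. *)
Lemma Gamma_GammaB (f : pvec -> R) : smooth f -> Gamma V0 V sigma f = GammaB V f f.
Proof.
move=> sf; apply/funext => w.
by rewrite /Gamma !calLE liftL_sqr // Zsig_sqr //; field.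
Qed.

Lemma GammaL_frozen (f : pvec -> R) (xi : vec) : smooth f ->
  GammaL V0 V (fun p => f (p, xi)) = fun p => GammaB V f f (p, xi).
Proof.
move=> sf; apply/funext => p; rewrite /GammaL.
rewrite (congr1 (fun g => g p) (Lop_frozen (fun w => f w * f w) xi)).
by rewrite (congr1 (fun g => g p) (Lop_frozen f xi)) /= liftL_sqr //; field.
Qed.

Lemma GammaLB_frozen (f g : pvec -> R) (xi : vec) p : smooth f -> smooth g ->
  GammaLB V0 V (fun q => f (q, xi)) (fun q => g (q, xi)) p = GammaB V f g (p, xi).
Proof.
move=> sf sg; rewrite /GammaLB.
rewrite (congr1 (fun G => G p) (GammaL_frozen (f := fun w => f w + g w) xi (smoothD sf sg))).
rewrite (congr1 (fun G => G p) (GammaL_frozen (f := fun w => f w - g w) xi (smoothB sf sg))).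
rewrite /GammaB -sumrB mulr_sumr; apply: eq_bigr => i _.
rewrite /pact derive_subf ?derive_addf; try exact: smooth_differentiable.
by field.
Qed.

Lemma Gamma2L_frozen (f : pvec -> R) (xi : vec) p : smooth f ->
  Gamma2L V0 V (fun q => f (q, xi)) p =
  2^-1 * (liftL (GammaB V f f) (p, xi) - 2 * GammaB V f (liftL f) (p, xi)).
Proof.
move=> sf; rewrite /Gamma2L (GammaL_frozen xi sf) (Lop_frozen f xi).
rewrite (congr1 (fun g => g p) (Lop_frozen (GammaB V f f) xi)).
by rewrite GammaLB_frozen //; exact: smooth_liftL.
Qed.

Lemma Zsig_pact_commutator (X : vec -> vec) (f : pvec -> R) w : smooth_vf X -> smooth f ->
  Zsig sigma (pact X f) w - pact X (Zsig sigma f) w =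
  - \sum_(j < k) vf_act X (Defs.comp sigma j) w.1 * dxi j f w.
Proof.
move=> sX sf; pose s_ j := fun z : pvec => Defs.comp sigma j z.1.
have ds j z : differentiable (s_ j) z by exact/differentiable_fst_comp/(hsigma j).1.
have ddf j z : differentiable (dxi j f) z by exact/smooth_differentiable/smooth_derive.
have Zf : Zsig sigma f = fun z => \sum_(j < k) s_ j z * dxi j f z.
  by apply/funext => z; rewrite Zsig_sumE //; exact: smooth_differentiable.
have X_s j : pact X (s_ j) w = vf_act X (Defs.comp sigma j) w.1.
  by case: w => p xi; apply: derive_reparam => t; rewrite pair_line.
have dxi_Xf j : dxi j (pact X f) w = pact X (dxi j f) w.
  by rewrite /pact (dxi_derive_field (fun p => ((X p, 0) : pvec)) j sf).
rewrite Zsig_sumE; last exact/smooth_differentiable/smooth_pact.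
rewrite {2}/pact Zf derive_sumf; last by move=> j; exact: differentiableM.
rewrite -sumrB -sumrN; apply: eq_bigr => j _.
rewrite derive_mulf // -/(pact X (dxi j f) w) -/(pact X (s_ j) w).
by rewrite dxi_Xf X_s /s_; ring.
Qed.

Lemma Gamma2_decomp (f : pvec -> R) p xi : smooth f ->
  Gamma2 V0 V sigma f (p, xi) = Gamma2L V0 V (fun q => f (q, xi)) p -
    \sum_(i < k) pact (V i) f (p, xi) *
      \sum_(j < k) vf_act (V i) (Defs.comp sigma j) p * dxi j f (p, xi).
Proof.
move=> sf; set w := (p, xi).
have dVf i z : differentiable (pact (V i) f) z.
  exact/smooth_differentiable/smooth_pact.
have Z_Gamma : Zsig sigma (GammaB V f f) w =
    2 * \sum_(i < k) pact (V i) f w * Zsig sigma (pact (V i) f) w.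
  rewrite /Zsig /GammaB derive_sumf; last by move=> i; exact: differentiableM.
  rewrite mulr_sumr; apply: eq_bigr => i _.
  by rewrite derive_mulf //; ring.
have GammaB_calL : GammaB V f (calL V0 V sigma f) w =
    GammaB V f (liftL f) w + \sum_(i < k) pact (V i) f w * pact (V i) (Zsig sigma f) w.
  rewrite /GammaB -big_split; apply: eq_bigr => i _.
  rewrite /pact (derive_addf (f := liftL f) (g := Zsig sigma f)); first by rewrite mulrDr.
    exact/smooth_differentiable/smooth_liftL.
  exact: differentiable_Zsig.
have commutators : \sum_(i < k) pact (V i) f w *
      \sum_(j < k) vf_act (V i) (Defs.comp sigma j) p * dxi j f w =
    \sum_(i < k) pact (V i) f w * pact (V i) (Zsig sigma f) w -
    \sum_(i < k) pact (V i) f w * Zsig sigma (pact (V i) f) w.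
  rewrite -sumrB; apply: eq_bigr => i _.
  by rewrite -mulrBr -opprB Zsig_pact_commutator // opprK.
rewrite /Gamma2 (Gamma_GammaB sf) GammaB_calL calLE Z_Gamma Gamma2L_frozen //.
rewrite -/w commutators.
(* [field] runs on variables: on the goal itself Rocq would try to identify the
   derivative atoms by unfolding them. *)
have regroup (a b s t : R) : 2^-1 * (a + 2 * t - 2 * (b + s)) = 2^-1 * (a - 2 * b) - (s - t).
  by field.
exact: regroup.
Qed.

Lemma dxi_pact (X : vec -> vec) (h : pvec -> R) j : smooth h ->
  dxi j (pact X h) = pact X (dxi j h).
Proof. by move=> sh; rewrite /pact (dxi_derive_field (fun p => ((X p, 0) : pvec)) j sh). Qed.

Lemma dxi_Zsig (h : pvec -> R) j : smooth h -> dxi j (Zsig sigma h) = Zsig sigma (dxi j h).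
Proof. by move=> sh; rewrite /Zsig (dxi_derive_field (fun p => ((0, sigma p) : pvec)) j sh). Qed.

Lemma dxi_liftL (h : pvec -> R) j : smooth h -> dxi j (liftL h) = liftL (dxi j h).
Proof.
move=> sh; have sVh i : smooth (pact (V i) h) by exact: smooth_pact.
have sVVh i : smooth (pact (V i) (pact (V i) h)) by exact: smooth_pact.
apply/funext => w.
have -> : dxi j (liftL h) w =
    \sum_(i < k) dxi j (pact (V i) (pact (V i) h)) w + dxi j (pact V0 h) w.
  rewrite /dxi derive_addf ?derive_sumf //.
  - by move=> i; exact: smooth_differentiable.
  - by apply/differentiable_sumf => i; exact: smooth_differentiable.
  - exact/smooth_differentiable/smooth_pact.
rewrite (dxi_pact V0 j sh) /liftL.
apply: f_equal2; last by [].
apply: eq_bigr => i _.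
by rewrite (dxi_pact (V i) j (sVh i)) (dxi_pact (V i) j sh).
Qed.

Lemma dxi_calL (f : pvec -> R) j w : smooth f ->
  dxi j (calL V0 V sigma f) w = calL V0 V sigma (dxi j f) w.
Proof.
move=> sf; rewrite calLE /dxi (derive_addf (f := liftL f) (g := Zsig sigma f)).
- rewrite -/(dxi j (liftL f) w) -/(dxi j (Zsig sigma f) w).
  by rewrite (dxi_liftL j sf) (dxi_Zsig j sf).
- exact/smooth_differentiable/smooth_liftL.
- exact: differentiable_Zsig.
Qed.

Lemma calL_sum n (F : 'I_n -> pvec -> R) w : (forall j, smooth (F j)) ->
  calL V0 V sigma (fun z => \sum_(j < n) F j z) w = \sum_(j < n) calL V0 V sigma (F j) w.
Proof.
move=> sF; have pact_sum X (G : 'I_n -> pvec -> R) : (forall j z, differentiable (G j) z) ->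
    pact X (fun z => \sum_(j < n) G j z) = fun z => \sum_(j < n) pact X (G j) z.
  by move=> dG; apply/funext => z; rewrite /pact derive_sumf.
have dF j z : differentiable (F j) z by exact: smooth_differentiable.
have VV i : pact (V i) (pact (V i) (fun z => \sum_(j < n) F j z)) w =
    \sum_(j < n) pact (V i) (pact (V i) (F j)) w.
  rewrite (congr1 (pact (V i)) (pact_sum (V i) F dF)) pact_sum // => j z.
  exact/smooth_differentiable/smooth_pact.
have Z : Zsig sigma (fun z => \sum_(j < n) F j z) w = \sum_(j < n) Zsig sigma (F j) w.
  by rewrite /Zsig derive_sumf.
rewrite calLE /liftL [X in X + _ + _ = _](eq_bigr _ (fun i _ => VV i)) exchange_big /=.
rewrite (congr1 (fun g => g w) (pact_sum V0 F dF)) Z -!big_split.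
by apply: eq_bigr => j _; rewrite calLE.
Qed.

Lemma Gamma2Z_sum_Gamma (f : pvec -> R) w : smooth f ->
  Gamma2Z V0 V sigma f w = \sum_(j < k) Gamma V0 V sigma (dxi j f) w.
Proof.
move=> sf; have sdf j : smooth (dxi j f) by exact: smooth_derive.
rewrite /Gamma2Z /GammaZ /GammaZB calL_sum => [|j]; last exact: smoothM.
rewrite [2 * _]mulr_sumr -sumrB mulr_sumr; apply: eq_bigr => j _.
by rewrite /Gamma dxi_calL // mulrA.
Qed.

Lemma Gamma_ge0 (f : pvec -> R) w : smooth f -> 0 <= Gamma V0 V sigma f w.
Proof.
by move=> sf; rewrite Gamma_GammaB //; apply: sumr_ge0 => i _; rewrite -expr2 sqr_ge0.
Qed.

End lifted_generator.

Section cauchy_schwarz.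
Variable R : realType.

Lemma sum_mul_sqr_le (I : finType) (x y : I -> R) :
  (\sum_i x i * y i) ^+ 2 <= (\sum_i x i ^+ 2) * (\sum_i y i ^+ 2).
Proof.
set X := \sum_i x i ^+ 2; set Y := \sum_i y i ^+ 2; set B := \sum_i x i * y i.
have inner i : \sum_j (x i * y j - x j * y i) ^+ 2 =
    x i ^+ 2 * Y + y i ^+ 2 * X - 2 * (x i * y i) * B.
  rewrite /X /Y /B !mulr_sumr -big_split -sumrB; apply: eq_bigr => j _ /=; ring.
have lagrange : \sum_i \sum_j (x i * y j - x j * y i) ^+ 2 = 2 * (X * Y - B ^+ 2).
  rewrite (eq_bigr _ (fun i _ => inner i)) sumrB big_split /= -!mulr_suml.
  by rewrite -mulr_sumr -/X -/Y -/B; ring.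
rewrite -subr_ge0 -(@pmulr_rge0 _ 2) // -lagrange.
by apply: sumr_ge0 => i _; apply: sumr_ge0 => j _; exact: sqr_ge0.
Qed.

Lemma sum_bilinear_le (I J : finType) (P : I -> R) (d : J -> R) (a : I -> J -> R) (C : R) :
  Num.sqrt (\sum_i \sum_j a i j ^+ 2) <= C ->
  \sum_i P i * (\sum_j a i j * d j) <= C / 2 * (\sum_i P i * P i + \sum_j d j * d j).
Proof.
set A := \sum_i \sum_j _; set N := \sum_i P i * P i; set M := \sum_j d j * d j => sAC.
have N0 : 0 <= N by apply: sumr_ge0 => i _; rewrite -expr2 sqr_ge0.
have M0 : 0 <= M by apply: sumr_ge0 => j _; rewrite -expr2 sqr_ge0.
have A0 : 0 <= A by apply: sumr_ge0 => i _; apply: sumr_ge0 => j _; exact: sqr_ge0.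
have CS : (\sum_i P i * (\sum_j a i j * d j)) ^+ 2 <= A * (N * M).
  have -> : \sum_i P i * (\sum_j a i j * d j) = \sum_(ij : I * J) a ij.1 ij.2 * (P ij.1 * d ij.2).
    rewrite -(pair_bigA _ (fun i j => a i j * (P i * d j))).
    by apply: eq_bigr => i _; rewrite mulr_sumr; apply: eq_bigr => j _; ring.
  have -> : A = \sum_(ij : I * J) a ij.1 ij.2 ^+ 2.
    by rewrite /A -(pair_bigA _ (fun i j => a i j ^+ 2)).
  have -> : N * M = \sum_(ij : I * J) (P ij.1 * d ij.2) ^+ 2.
    rewrite -(pair_bigA _ (fun i j => (P i * d j) ^+ 2)) mulr_suml.
    by apply: eq_bigr => i _; rewrite mulr_sumr; apply: eq_bigr => j _; ring.
  exact: sum_mul_sqr_le.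
have AM_GM : Num.sqrt (N * M) <= (N + M) / 2.
  rewrite -(ger0_norm (x := (N + M) / 2)) ?divr_ge0 ?addr_ge0 // -sqrtr_sqr.
  rewrite ler_sqrt ?sqr_ge0 // -subr_ge0.
  have -> : ((N + M) / 2) ^+ 2 - N * M = ((N - M) / 2) ^+ 2 by field.
  exact: sqr_ge0.
set T := \sum_i _; have C0 : 0 <= C := le_trans (sqrtr_ge0 _) sAC.
apply: (le_trans (ler_norm T)); rewrite -sqrtr_sqr.
rewrite (le_trans (y := Num.sqrt (A * (N * M)))) ?ler_sqrt ?mulr_ge0 //.
rewrite sqrtrM // mulrAC -mulrA ler_pM ?sqrtr_ge0 //.
Qed.

End cauchy_schwarz.

Unset Implicit Arguments.

Theorem theorem4p1 (R : realType) (k : nat)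
  (V0 : 'rV[R]_k -> 'rV[R]_k) (V : 'I_k -> 'rV[R]_k -> 'rV[R]_k)
  (sigma : 'rV[R]_k -> 'rV[R]_k) (rho : R) :
  smooth_vf V0 -> (forall i, smooth_vf (V i)) ->
  C1_map sigma ->
  has_ubound (range (sigma_norm V sigma)) ->
  (forall f : 'rV[R]_k -> R, smooth f ->
     forall p, rho * GammaL V0 V f p <= Gamma2L V0 V f p) ->
  forall f : 'rV[R]_k * 'rV[R]_k -> R, smooth f ->
  forall z : 'rV[R]_k * 'rV[R]_k,
    (rho - Csigma V sigma / 2) * Gamma V0 V sigma f z
      - Csigma V sigma / 2 * GammaZ f z <= Gamma2 V0 V sigma f z
    /\ 0 <= Gamma2Z V0 V sigma f z.
Proof.
move=> hV0 hV hsigma sigma_bounded hL f sf [p xi]; split; last first.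
  rewrite Gamma2Z_sum_Gamma //; apply: sumr_ge0 => j _.
  exact/Gamma_ge0/smooth_derive.
have GammaL_GammaB : GammaL V0 V (fun q => f (q, xi)) p = GammaB V f f (p, xi).
  by rewrite (GammaL_frozen V0 hV xi sf).
have := hL _ (smooth_frozen xi sf) p; rewrite GammaL_GammaB.
have C_ge : sigma_norm V sigma p <= Csigma V sigma by apply: ub_le_sup sigma_bounded _ _; exists p.
have := sum_bilinear_le (fun i => pact (V i) f (p, xi)) (fun j => dxi j f (p, xi))
  (a := fun i j => vf_act (V i) (Defs.comp sigma j) p) C_ge.
rewrite (Gamma2_decomp hV0 hV hsigma p xi sf) (Gamma_GammaB V0 sigma hV sf).
have conclude (G GZ G2L T C : R) : T <= C / 2 * (G + GZ) -> rho * G <= G2L ->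
  (rho - C / 2) * G - C / 2 * GZ <= G2L - T by move=> *; nra.
exact: conclude.
Qed.
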